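(* In a discrete Dubins path, a long edge or a short edge can be adjacent only to a normal edge.
   Context: Fix an angle $\theta$ with $0\le\theta\le\pi/2$ such that $2\pi/\theta$ is an integer, and a length $\ell>0$. For a polygonal path, the turn at an internal vertex is the angle in $[0,\pi]$ between the direction of the incoming edge and the direction of the outgoing edge. An edge is short if its length is $<\ell$, normal if $=\ell$, long if $>\ell$. An edge $e$ with an adjacent edge at each end is an inflection edge if its two adjacent edges lie on opposite sides of the supporting line of $e$, and non-inflection otherwise. A discrete curvature-constrained path is a polygonal path such that: (i) the turn at every internal vertex is at most $\theta$; (ii) no two adjacent edges are both short; (iii) for every short non-inflection edge $ab$ with adjacent edges $a^-a$ and $bb^+$, the angle between the directions $\overrightarrow{a^-a}$ and $\overrightarrow{bb^+}$ is at most $\theta$. A configuration is a pair $(u,U)$ of a point $u$ and a vector $U$ of length $\ell$. A polygonal path $P$ with first vertex $u$ starts at $(u,U)$ if prepending the segment from $u-U$ to $u$ (the pre-edge) yields a discrete curvature-constrained path; $P$ with last vertex $v$ ends at $(v,V)$ if appending the segment from $v$ to $v+V$ (the post-edge) yields a discrete curvature-constrained path. A discrete Dubins path is a discrete curvature-constrained path of minimum length among all those starting at a given configuration $\mathcal U$ and ending at a given configuration $\mathcal V$. Standing assumption: paths make a non-zero turn at every internal vertex (no vertex lies in the interior of a straight portion of the path). *)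

From Stdlib Require Import Reals Lra List.
Open Scope R_scope.

Definition pt : Type := (R * R)%type.

Definition vadd (a b : pt) : pt := (fst a + fst b, snd a + snd b).
Definition vsub (a b : pt) : pt := (fst a - fst b, snd a - snd b).
Definition dot (a b : pt) : R := fst a * fst b + snd a * snd b.
Definition cross (a b : pt) : R := fst a * snd b - snd a * fst b.
Definition vnorm (a : pt) : R := sqrt (dot a a).

Definition angle (a b : pt) : R := acos (dot a b / (vnorm a * vnorm b)).

Definition vtx (p : list pt) (i : nat) : pt := nth i p (0, 0).

Definition edge_vec (p : list pt) (i : nat) : pt := vsub (vtx p (S i)) (vtx p i).
Definition edge_len (p : list pt) (i : nat) : R := vnorm (edge_vec p i).

Definition is_short (l : R) (p : list pt) (i : nat) : Prop := edge_len p i < l.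
Definition is_normal (l : R) (p : list pt) (i : nat) : Prop := edge_len p i = l.
Definition is_long (l : R) (p : list pt) (i : nat) : Prop := edge_len p i > l.

(* turn at internal vertex i+1 (between edge i and edge i+1) *)
Definition turn (p : list pt) (i : nat) : R := angle (edge_vec p i) (edge_vec p (S i)).

(* edge i+1 (with adjacent edges i and i+2) is an inflection edge:
   the adjacent edges lie on (strictly) opposite sides of its supporting line *)
Definition inflection (p : list pt) (i : nat) : Prop :=
  cross (edge_vec p (S i)) (vsub (vtx p i) (vtx p (S i))) *
  cross (edge_vec p (S i)) (vsub (vtx p (S (S (S i)))) (vtx p (S i))) < 0.

Definition path_length (p : list pt) : R :=
  fold_right Rplus 0 (map (edge_len p) (seq 0 (pred (length p)))).

Definition dcc_path (theta l : R) (p : list pt) : Prop :=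
  (p <> nil) /\
  (forall i, (S i < length p)%nat -> vtx p i <> vtx p (S i)) /\
  (forall i, (S (S i) < length p)%nat -> turn p i <= theta) /\
  (forall i, (S (S i) < length p)%nat -> ~ (is_short l p i /\ is_short l p (S i))) /\
  (forall i, (S (S (S i)) < length p)%nat ->
     is_short l p (S i) -> ~ inflection p i ->
     angle (edge_vec p i) (edge_vec p (S (S i))) <= theta).

Definition is_config (l : R) (u U : pt) : Prop := vnorm U = l.

Definition starts_at (theta l : R) (p : list pt) (u U : pt) : Prop :=
  vtx p 0 = u /\ dcc_path theta l (vsub u U :: p).

Definition ends_at (theta l : R) (p : list pt) (v V : pt) : Prop :=
  last p (0, 0) = v /\ dcc_path theta l (p ++ vadd v V :: nil).

Definition nonzero_turns (p : list pt) : Prop :=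
  forall i, (S (S i) < length p)%nat -> turn p i <> 0.

Definition admissible (theta l : R) (u U v V : pt) (p : list pt) : Prop :=
  dcc_path theta l p /\ starts_at theta l p u U /\ ends_at theta l p v V /\
  nonzero_turns p.

Definition discrete_dubins (theta l : R) (u U v V : pt) (p : list pt) : Prop :=
  admissible theta l u U v V p /\
  forall q, admissible theta l u U v V q -> path_length p <= path_length q.

(* Suppose an edge of a discrete Dubins path is short or long while an adjacent edge is
   not normal.  For a long edge followed by a short one,
   slide their common vertex back along the long edge by a small fraction s of it;
   symmetrically for a short edge followed by a long one; for two long edges, cut the
   corner by a new edge joining the points at distance s along both edges from their
   common vertex.  As the turn there is nonzero (and at most PI/2), the strict triangle
   inequality makes the path strictly shorter, and for small s long edges stay long and
   all turns stay nonzero.  Turns stay at most theta because each new edge direction is a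
   positive combination of neighbouring old ones, and directions within theta <= PI/2 of
   a fixed one form a convex cone.  Condition (iii) survives because the neighbours of any
   short edge are within theta of each other, also at an inflection edge: there both lie
   on the same side of the short edge.  This contradicts minimality. *)

From Stdlib Require Import Reals List Lra Lia Psatz.
Import ListNotations.
Open Scope R_scope.

Definition scale (k : R) (a : pt) : pt := (k * fst a, k * snd a).
Definition origin : pt := (0, 0).

Ltac pt_ring := apply injective_projections; simpl; ring.

Lemma lt_of_sq_lt x y : x * x < y * y -> 0 <= y -> x < y.
Proof. intros H Hy; destruct (Rlt_le_dec x y); [assumption | nra]. Qed.

Lemma le_of_sq_le x y : x * x <= y * y -> 0 <= y -> x <= y.
Proof. intros H Hy; destruct (Rle_lt_dec x y); [assumption | nra]. Qed.

Lemma dot_self_ge0 a : 0 <= dot a a.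
Proof. unfold dot; nra. Qed.

Lemma dot_self_pos a : a <> origin -> 0 < dot a a.
Proof.
  destruct a as [x y]; unfold dot, origin; simpl; intros Ha.
  destruct (Req_dec x 0), (Req_dec y 0); subst; [congruence|nra..].
Qed.

Lemma vnorm_ge0 a : 0 <= vnorm a.
Proof. apply sqrt_pos. Qed.

Lemma vnorm_pos a : a <> origin -> 0 < vnorm a.
Proof. intros Ha; apply sqrt_lt_R0, dot_self_pos, Ha. Qed.

Lemma vnorm_sq a : vnorm a * vnorm a = dot a a.
Proof. apply sqrt_sqrt, dot_self_ge0. Qed.

Lemma vnorm_scale k a : 0 <= k -> vnorm (scale k a) = k * vnorm a.
Proof.
  intros Hk; unfold vnorm.
  replace (dot (scale k a) (scale k a)) with (k * k * dot a a)
    by (unfold dot, scale; simpl; ring).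
  rewrite sqrt_mult_alt, sqrt_square; nra.
Qed.

Lemma lagrange_identity a b :
  dot a b * dot a b + cross a b * cross a b = dot a a * dot b b.
Proof. unfold dot, cross; ring. Qed.

Lemma dot_sq_le a b :
  dot a b * dot a b <= (vnorm a * vnorm b) * (vnorm a * vnorm b).
Proof.
  pose proof (lagrange_identity a b); pose proof (vnorm_sq a); pose proof (vnorm_sq b); nra.
Qed.

Lemma dot_bounds a b : - (vnorm a * vnorm b) <= dot a b <= vnorm a * vnorm b.
Proof.
  pose proof (dot_sq_le a b); pose proof (vnorm_ge0 a); pose proof (vnorm_ge0 b).
  assert (0 <= vnorm a * vnorm b) by nra. split; nra.
Qed.

Lemma dot_lt_vnorm a b : cross a b <> 0 -> dot a b < vnorm a * vnorm b.
Proof.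
  intros Hc. pose proof (lagrange_identity a b); pose proof (vnorm_sq a); pose proof (vnorm_sq b).
  pose proof (vnorm_ge0 a); pose proof (vnorm_ge0 b).
  assert (0 < cross a b * cross a b) by (apply Rsqr_pos_lt in Hc; exact Hc).
  apply lt_of_sq_lt; nra.
Qed.

Lemma vnorm_add_sq a b :
  vnorm (vadd a b) * vnorm (vadd a b) = vnorm a * vnorm a + 2 * dot a b + vnorm b * vnorm b.
Proof. rewrite !vnorm_sq; unfold dot, vadd; simpl; ring. Qed.

Lemma vnorm_add_le a b : vnorm (vadd a b) <= vnorm a + vnorm b.
Proof.
  pose proof (vnorm_add_sq a b); pose proof (dot_bounds a b).
  pose proof (vnorm_ge0 a); pose proof (vnorm_ge0 b); pose proof (vnorm_ge0 (vadd a b)). nra.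
Qed.

Lemma vnorm_add_lt a b : cross a b <> 0 -> vnorm (vadd a b) < vnorm a + vnorm b.
Proof.
  intros Hc. pose proof (vnorm_add_sq a b); pose proof (dot_lt_vnorm a b Hc).
  pose proof (vnorm_ge0 a); pose proof (vnorm_ge0 b); pose proof (vnorm_ge0 (vadd a b)). nra.
Qed.

Lemma same_side_product y0 y2 A B : 0 < A -> 0 < B -> 0 <= y0 * y2 ->
  y2 * y2 * (A * A) <= y0 * y0 * (B * B) -> y2 * y2 * A <= y0 * y2 * B.
Proof.
  intros HA HB Hy H.
  destruct (Rle_dec 0 y0), (Rle_dec 0 y2).
  - assert (y2 * A <= y0 * B) by (apply le_of_sq_le; nra). nra.
  - assert (y0 = 0 \/ y2 = 0) as [->| ->] by nra; nra.
  - assert (y0 = 0 \/ y2 = 0) as [->| ->] by nra; nra.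
  - assert (- y2 * A <= - y0 * B) by (apply le_of_sq_le; nra). nra.
Qed.

Lemma same_side_cos_bound_ordered c A B X0 Y0 X2 Y2 : 0 <= c -> 0 < A -> 0 < B ->
  X0 * X0 + Y0 * Y0 = A * A -> X2 * X2 + Y2 * Y2 = B * B ->
  c * A <= X0 -> c * B <= X2 -> 0 <= Y0 * Y2 -> X0 * B <= X2 * A ->
  c * A * B <= X0 * X2 + Y0 * Y2.
Proof.
  intros Hc HA HB H0 H2 HX0 HX2 HY Hle.
  assert (X2 <= B) by nra. assert (0 <= X0) by nra.
  assert (X0 * B * (X0 * B) <= X2 * A * (X2 * A)) by (apply Rmult_le_compat; nra).
  assert (Y2 * Y2 * A <= Y0 * Y2 * B) by (apply same_side_product; nra).
  assert (0 <= (B - X2) * (A * B + A * X2 - X0 * B)) by (apply Rmult_le_pos; nra).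
  assert (c * A * B * B <= X0 * B * B) by nra.
  apply (Rmult_le_reg_r B); nra.
Qed.

(* (X0, Y0) and (X2, Y2) are coordinates, along and across a reference direction, of
   vectors of lengths A and B, and c = cos t: two vectors within angle t of the reference
   direction and on the same side of it are within angle t of each other. *)
Lemma same_side_cos_bound c A B X0 Y0 X2 Y2 : 0 <= c -> 0 < A -> 0 < B ->
  X0 * X0 + Y0 * Y0 = A * A -> X2 * X2 + Y2 * Y2 = B * B ->
  c * A <= X0 -> c * B <= X2 -> 0 <= Y0 * Y2 ->
  c * A * B <= X0 * X2 + Y0 * Y2.
Proof.
  intros. destruct (Rle_dec (X0 * B) (X2 * A)).
  - apply same_side_cos_bound_ordered; assumption.
  - assert (c * B * A <= X2 * X0 + Y2 * Y0)
      by (apply same_side_cos_bound_ordered; nra).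
    lra.
Qed.

Lemma cross_scale_l k a b : cross (scale k a) b = k * cross a b.
Proof. unfold cross, scale; simpl; ring. Qed.

Lemma cross_scale_r k a b : cross a (scale k b) = k * cross a b.
Proof. unfold cross, scale; simpl; ring. Qed.

Lemma cross_add_l a b c : cross (vadd a b) c = cross a c + cross b c.
Proof. unfold cross, vadd; simpl; ring. Qed.

Lemma cross_add_r a b c : cross a (vadd b c) = cross a b + cross a c.
Proof. unfold cross, vadd; simpl; ring. Qed.

Lemma cross_anticomm a b : cross a b = - cross b a.
Proof. unfold cross; ring. Qed.

Lemma cross_self a : cross a a = 0.
Proof. unfold cross; ring. Qed.

Lemma cos_angle a b : a <> origin -> b <> origin ->
  cos (angle a b) * (vnorm a * vnorm b) = dot a b.
Proof.
  intros Ha Hb. pose proof (vnorm_pos a Ha); pose proof (vnorm_pos b Hb).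
  assert (0 < vnorm a * vnorm b) by nra.
  pose proof (dot_bounds a b).
  unfold angle; rewrite cos_acos; [field; lra|].
  split; [apply Rmult_le_reg_r with (vnorm a * vnorm b) | apply Rmult_le_reg_r with (vnorm a * vnorm b)];
    unfold Rdiv; rewrite ?Rmult_assoc, ?Rinv_l by lra; lra.
Qed.

Lemma angle_le_iff a b t : a <> origin -> b <> origin -> 0 <= t <= PI ->
  angle a b <= t <-> cos t * (vnorm a * vnorm b) <= dot a b.
Proof.
  intros Ha Hb Ht. pose proof (vnorm_pos a Ha); pose proof (vnorm_pos b Hb).
  assert (Hp : 0 < vnorm a * vnorm b) by nra.
  rewrite <- (cos_angle a b Ha Hb). pose proof (acos_bound (dot a b / (vnorm a * vnorm b))).
  fold (angle a b) in *.
  split; intros Hle.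
  - apply Rmult_le_compat_r; [lra|]. apply cos_decr_1; lra.
  - apply Rmult_le_reg_r in Hle; [|assumption]. apply cos_decr_0; lra.
Qed.

Lemma angle_sym a b : angle a b = angle b a.
Proof. unfold angle, dot. f_equal. f_equal; ring. Qed.

Lemma angle_scale_l k a b : 0 < k -> angle (scale k a) b = angle a b.
Proof.
  intros Hk. unfold angle. rewrite vnorm_scale by lra. f_equal.
  replace (dot (scale k a) b) with (k * dot a b) by (unfold dot, scale; simpl; ring).
  unfold Rdiv. rewrite !Rinv_mult.
  replace (k * dot a b * (/ k * / vnorm a * / vnorm b))
    with (k * / k * (dot a b * (/ vnorm a * / vnorm b))) by ring.
  rewrite Rinv_r by lra. ring.
Qed.

Lemma angle_scale_r k a b : 0 < k -> angle a (scale k b) = angle a b.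
Proof. intros. rewrite angle_sym, angle_scale_l, angle_sym by assumption. reflexivity. Qed.

Lemma angle_neq0 a b : a <> origin -> b <> origin -> cross a b <> 0 -> angle a b <> 0.
Proof.
  intros Ha Hb Hc H0. pose proof (cos_angle a b Ha Hb) as Hcos.
  rewrite H0, cos_0, Rmult_1_l in Hcos.
  pose proof (lagrange_identity a b); pose proof (vnorm_sq a); pose proof (vnorm_sq b).
  apply Hc. nra.
Qed.

Lemma scale_neq0 k a : 0 < k -> a <> origin -> scale k a <> origin.
Proof.
  intros Hk Ha Hs. apply Ha. destruct a as [x y]; unfold scale, origin in *; simpl in *.
  injection Hs; intros; f_equal; nra.
Qed.

Lemma neq0_of_dot_pos a w : 0 < dot a w -> w <> origin.
Proof. intros H ->. unfold dot, origin in H; simpl in H. lra. Qed.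

Section AcuteAngles.

Variable t : R.
Hypothesis Ht : 0 <= t <= PI / 2.

Lemma cos_acute_bounds : 0 <= cos t <= 1.
Proof. pose proof PI_RGT_0. split; [apply cos_ge_0 | apply COS_bound]; lra. Qed.

Let angle_le_iff_acute a b : a <> origin -> b <> origin ->
  angle a b <= t <-> cos t * (vnorm a * vnorm b) <= dot a b.
Proof. pose proof PI_RGT_0. intros; apply angle_le_iff; auto; lra. Qed.

Lemma dot_nonneg_of_angle_le a b : a <> origin -> b <> origin ->
  angle a b <= t -> 0 <= dot a b.
Proof.
  intros Ha Hb H. apply angle_le_iff_acute in H; auto.
  pose proof cos_acute_bounds; pose proof (vnorm_ge0 a); pose proof (vnorm_ge0 b).
  assert (0 <= vnorm a * vnorm b) by nra. nra.
Qed.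

Lemma cross_neq0_of_angle a b : a <> origin -> b <> origin ->
  angle a b <= t -> angle a b <> 0 -> cross a b <> 0.
Proof.
  intros Ha Hb Hle Hne Hc. apply Hne. pose proof PI_RGT_0.
  pose proof (dot_nonneg_of_angle_le a b Ha Hb Hle).
  pose proof (lagrange_identity a b); pose proof (vnorm_sq a); pose proof (vnorm_sq b).
  pose proof (vnorm_pos a Ha); pose proof (vnorm_pos b Hb).
  assert (Hd : dot a b = vnorm a * vnorm b)
    by (apply Rle_antisym; [apply dot_bounds | apply le_of_sq_le; nra]).
  pose proof (cos_angle a b Ha Hb) as Hcos. rewrite Hd in Hcos.
  assert (cos (angle a b) = cos 0).
  { rewrite cos_0. apply Rmult_eq_reg_r with (vnorm a * vnorm b); nra. }
  apply cos_inj; [| lra | assumption].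
  unfold angle; apply acos_bound.
Qed.

Lemma angle_self_le a : a <> origin -> angle a a <= t.
Proof.
  intros Ha. apply angle_le_iff_acute; auto.
  rewrite vnorm_sq. pose proof cos_acute_bounds; pose proof (dot_self_ge0 a). nra.
Qed.

Lemma angle_add_le z w1 w2 : z <> origin -> w1 <> origin -> w2 <> origin ->
  vadd w1 w2 <> origin -> angle w1 z <= t -> angle w2 z <= t -> angle (vadd w1 w2) z <= t.
Proof.
  intros Hz H1 H2 H12 A1 A2. apply angle_le_iff_acute in A1, A2; auto.
  apply angle_le_iff_acute; auto.
  pose proof cos_acute_bounds; pose proof (vnorm_add_le w1 w2); pose proof (vnorm_ge0 z).
  replace (dot (vadd w1 w2) z) with (dot w1 z + dot w2 z) by (unfold dot, vadd; simpl; ring).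
  assert (cos t * vnorm (vadd w1 w2) * vnorm z <= cos t * (vnorm w1 + vnorm w2) * vnorm z)
    by (apply Rmult_le_compat_r; [| apply Rmult_le_compat_l]; lra).
  nra.
Qed.

(* Opposite turns at both ends of e1 keep e0 and e2 on the same side of e1. *)
Lemma angle_inflection_le e0 e1 e2 : e0 <> origin -> e1 <> origin -> e2 <> origin ->
  angle e0 e1 <= t -> angle e1 e2 <= t -> cross e0 e1 * cross e1 e2 < 0 ->
  angle e0 e2 <= t.
Proof.
  intros H0 H1 H2 A1 A2 Hx. rewrite angle_sym in A2.
  apply angle_le_iff_acute in A1, A2; auto. apply angle_le_iff_acute; auto.
  pose proof cos_acute_bounds.
  pose proof (vnorm_pos _ H0); pose proof (vnorm_pos _ H1); pose proof (vnorm_pos _ H2).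
  pose proof (vnorm_sq e0); pose proof (vnorm_sq e1); pose proof (vnorm_sq e2).
  assert (K := same_side_cos_bound (cos t) (vnorm e0 * vnorm e1) (vnorm e2 * vnorm e1)
     (dot e0 e1) (cross e1 e0) (dot e2 e1) (cross e1 e2)).
  replace (dot e0 e1 * dot e2 e1 + cross e1 e0 * cross e1 e2)
    with (dot e0 e2 * (vnorm e1 * vnorm e1)) in K by (rewrite vnorm_sq; unfold dot, cross; ring).
  assert (E0 : dot e0 e1 * dot e0 e1 + cross e1 e0 * cross e1 e0
              = vnorm e0 * vnorm e1 * (vnorm e0 * vnorm e1)).
  { transitivity (dot e0 e0 * dot e1 e1); [unfold dot, cross; ring | nra]. }
  assert (E2 : dot e2 e1 * dot e2 e1 + cross e1 e2 * cross e1 e2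
              = vnorm e2 * vnorm e1 * (vnorm e2 * vnorm e1)).
  { transitivity (dot e2 e2 * dot e1 e1); [unfold dot, cross; ring | nra]. }
  assert (Y : 0 <= cross e1 e0 * cross e1 e2).
  { rewrite (cross_anticomm e1 e0). lra. }
  specialize (K ltac:(lra) ltac:(nra) ltac:(nra) E0 E2 ltac:(lra) ltac:(lra) Y).
  apply (Rmult_le_reg_r (vnorm e1 * vnorm e1)); nra.
Qed.

End AcuteAngles.

Lemma angle_add_scale_le t z w1 w2 s : 0 <= t <= PI / 2 -> 0 < s ->
  z <> origin -> w1 <> origin -> w2 <> origin -> vadd w1 (scale s w2) <> origin ->
  angle w1 z <= t -> angle w2 z <= t -> angle (vadd w1 (scale s w2)) z <= t.
Proof.
  intros. apply angle_add_le; auto using scale_neq0. rewrite angle_scale_l; auto.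
Qed.

(* [edges_short_bridge] is condition (iii) for every short edge, inflection or not: at an
   inflection edge it follows from (i) by [angle_inflection_le]. *)
Record dcc_edges (t l : R) (n : nat) (E : nat -> pt) : Prop := {
  edges_neq0 : forall j, (j < n)%nat -> E j <> origin;
  edges_turn_le : forall j, (S j < n)%nat -> angle (E j) (E (S j)) <= t;
  edges_no_short_pair : forall j, (S j < n)%nat -> ~ (vnorm (E j) < l /\ vnorm (E (S j)) < l);
  edges_short_bridge : forall j, (S (S j) < n)%nat -> vnorm (E (S j)) < l ->
    angle (E j) (E (S (S j))) <= t }.

Definition edges_turning (n : nat) (E : nat -> pt) : Prop :=
  forall j, (S j < n)%nat -> cross (E j) (E (S j)) <> 0.

Lemma dcc_edges_ext t l n E F : (forall j, E j = F j) -> dcc_edges t l n E -> dcc_edges t l n F.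
Proof. intros Hext [H1 H2 H3 H4]; constructor; intros; rewrite <- !Hext in *; auto. Qed.

Lemma edges_turning_ext n E F : (forall j, E j = F j) -> edges_turning n E -> edges_turning n F.
Proof. intros Hext H j Hj; rewrite <- !Hext; auto. Qed.

Definition replace2 (m : nat) (a b : pt) (E : nat -> pt) (j : nat) : pt :=
  if j =? m then a else if j =? S m then b else E j.

Definition replace2_by3 (m : nat) (a c b : pt) (E : nat -> pt) (j : nat) : pt :=
  if j <? m then E j else if j =? m then a else if j =? S m then c
  else if j =? S (S m) then b else E (pred j).

Definition slide_back_edges (s : R) (m : nat) (E : nat -> pt) : nat -> pt :=
  replace2 m (scale (1 - s) (E m)) (vadd (E (S m)) (scale s (E m))) E.

Definition slide_forward_edges (s : R) (m : nat) (E : nat -> pt) : nat -> pt :=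
  replace2 m (vadd (E m) (scale s (E (S m)))) (scale (1 - s) (E (S m))) E.

Definition cut_corner_edges (s : R) (m : nat) (E : nat -> pt) : nat -> pt :=
  replace2_by3 m (scale (1 - s) (E m)) (scale s (vadd (E m) (E (S m)))) (scale (1 - s) (E (S m))) E.

Fixpoint rsum (f : nat -> R) (n : nat) : R :=
  match n with O => 0 | S n => rsum f n + f n end.

Lemma rsum_ext f g n : (forall j, (j < n)%nat -> f j = g j) -> rsum f n = rsum g n.
Proof.
  induction n; simpl; intros H; [reflexivity|].
  rewrite IHn, H by (intros; try apply H; lia). reflexivity.
Qed.

Lemma rsum_lt_replace2 f g m n : (S m < n)%nat ->
  (forall j, j <> m -> j <> S m -> g j = f j) -> g m + g (S m) < f m + f (S m) ->
  rsum g n < rsum f n.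
Proof.
  intros Hn Hfg Hlt. induction n as [|n IH]; [lia|]. simpl.
  destruct (Nat.eq_dec n (S m)) as [->|Hne].
  - simpl. rewrite (rsum_ext g f m) by (intros; apply Hfg; lia). lra.
  - rewrite Hfg by lia. specialize (IH ltac:(lia)). lra.
Qed.

Lemma rsum_lt_replace2_by3 f g m n : (S m < n)%nat ->
  (forall j, (j < m)%nat -> g j = f j) -> (forall j, (S (S m) < j)%nat -> g j = f (pred j)) ->
  g m + g (S m) + g (S (S m)) < f m + f (S m) -> rsum g (S n) < rsum f n.
Proof.
  intros Hn Hlow Hhigh Hlt. induction n as [|n IH]; [lia|].
  destruct (Nat.eq_dec n (S m)) as [->|Hne].
  - simpl. rewrite (rsum_ext g f m) by assumption. lra.
  - change (rsum g (S n) + g (S n) < rsum f n + f n).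
    rewrite Hhigh by lia. specialize (IH ltac:(lia)). cbn [pred]. lra.
Qed.

Ltac index_cases :=
  repeat match goal with
  | |- context [?x =? ?y] => destruct (Nat.eqb_spec x y)
  | H : context [?x =? ?y] |- _ => destruct (Nat.eqb_spec x y)
  | |- context [?x <? ?y] => destruct (Nat.ltb_spec x y)
  | H : context [?x <? ?y] |- _ => destruct (Nat.ltb_spec x y)
  end; try lia; subst.

Ltac unfold_surgery :=
  unfold slide_back_edges, slide_forward_edges, cut_corner_edges, replace2, replace2_by3 in *.

Section EdgeSurgery.

Variables (t l : R) (n : nat) (E : nat -> pt) (m : nat) (s : R).
Hypotheses (Ht : 0 <= t <= PI / 2) (HE : dcc_edges t l n E) (Hm : (S m < n)%nat) (Hs : 0 < s < 1).

Let Hnz := edges_neq0 _ _ _ _ HE.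
Let Hturn := edges_turn_le _ _ _ _ HE.
Let Hpair := edges_no_short_pair _ _ _ _ HE.
Let Hbridge := edges_short_bridge _ _ _ _ HE.

Ltac old_fact :=
  rewrite ?angle_scale_l, ?angle_scale_r by lra;
  first
  [ assumption
  | apply Hnz; lia
  | apply Hturn; lia
  | apply Hpair; lia
  | intros ?; apply Hbridge; [lia | assumption]
  | intros [? ?]; lra
  | intros ?; lra
  ].

Lemma dcc_edges_slide_back : l < (1 - s) * vnorm (E m) -> vnorm (E (S m)) < l ->
  dcc_edges t l n (slide_back_edges s m E).
Proof.
  intros Hlong Hshort.
  assert (N0 : E m <> origin) by (apply Hnz; lia).
  assert (N1 : E (S m) <> origin) by (apply Hnz; lia).
  assert (T01 : angle (E m) (E (S m)) <= t) by (apply Hturn; lia).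
  assert (Na : scale (1 - s) (E m) <> origin) by (apply scale_neq0; auto; lra).
  assert (Nb : vadd (E (S m)) (scale s (E m)) <> origin).
  { apply (neq0_of_dot_pos (E m)). pose proof (dot_self_pos _ N0).
    pose proof (dot_nonneg_of_angle_le t Ht _ _ N0 N1 T01).
    replace (dot (E m) (vadd (E (S m)) (scale s (E m)))) with (dot (E m) (E (S m)) + s * dot (E m) (E m))
      by (unfold dot, vadd, scale; simpl; ring). nra. }
  assert (La : l < vnorm (scale (1 - s) (E m))) by (rewrite vnorm_scale; lra).
  constructor; intros j Hj; unfold_surgery; index_cases.
  all: try old_fact.
  - rewrite angle_scale_l, angle_sym by lra.
    apply angle_add_scale_le; auto; try lra.
    + rewrite angle_sym; assumption.
    + apply angle_self_le; auto.
  - apply angle_add_scale_le; auto; lra.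
  - intros [_ H2]. apply (Hpair (S m)); [lia | auto].
  - intros H2. exfalso. apply (Hpair (S m)); [lia | auto].
Qed.

Lemma dcc_edges_slide_forward : vnorm (E m) < l -> l < (1 - s) * vnorm (E (S m)) ->
  dcc_edges t l n (slide_forward_edges s m E).
Proof.
  intros Hshort Hlong.
  assert (N0 : E m <> origin) by (apply Hnz; lia).
  assert (N1 : E (S m) <> origin) by (apply Hnz; lia).
  assert (T01 : angle (E m) (E (S m)) <= t) by (apply Hturn; lia).
  assert (Nb : scale (1 - s) (E (S m)) <> origin) by (apply scale_neq0; auto; lra).
  assert (Na : vadd (E m) (scale s (E (S m))) <> origin).
  { apply (neq0_of_dot_pos (E (S m))). pose proof (dot_self_pos _ N1).
    pose proof (dot_nonneg_of_angle_le t Ht _ _ N0 N1 T01).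
    replace (dot (E (S m)) (vadd (E m) (scale s (E (S m)))))
      with (dot (E m) (E (S m)) + s * dot (E (S m)) (E (S m)))
      by (unfold dot, vadd, scale; simpl; ring). nra. }
  assert (Lb : l < vnorm (scale (1 - s) (E (S m)))) by (rewrite vnorm_scale; lra).
  constructor; intros j Hj; unfold_surgery; index_cases.
  all: try old_fact.
  - rewrite angle_scale_r by lra.
    apply angle_add_scale_le; auto; try lra. apply angle_self_le; auto.
  - rewrite angle_sym. apply angle_add_scale_le; auto; try lra.
    + apply Hnz; lia.
    + rewrite angle_sym. apply Hturn; lia.
    + rewrite angle_sym. apply Hbridge; auto.
  - intros [H0 _]. apply (Hpair j); [lia | auto].
  - intros H0. exfalso. apply (Hpair (S j)); [lia | auto].
Qed.

Lemma dcc_edges_cut_corner : l < (1 - s) * vnorm (E m) -> l < (1 - s) * vnorm (E (S m)) ->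
  dcc_edges t l (S n) (cut_corner_edges s m E).
Proof.
  intros Hlong0 Hlong1.
  assert (N0 : E m <> origin) by (apply Hnz; lia).
  assert (N1 : E (S m) <> origin) by (apply Hnz; lia).
  assert (T01 : angle (E m) (E (S m)) <= t) by (apply Hturn; lia).
  assert (Na : scale (1 - s) (E m) <> origin) by (apply scale_neq0; auto; lra).
  assert (Nb : scale (1 - s) (E (S m)) <> origin) by (apply scale_neq0; auto; lra).
  assert (Nab : vadd (E m) (E (S m)) <> origin).
  { apply (neq0_of_dot_pos (E m)). pose proof (dot_self_pos _ N0).
    pose proof (dot_nonneg_of_angle_le t Ht _ _ N0 N1 T01).
    replace (dot (E m) (vadd (E m) (E (S m)))) with (dot (E m) (E m) + dot (E m) (E (S m)))
      by (unfold dot, vadd; simpl; ring). nra. }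
  assert (Nc : scale s (vadd (E m) (E (S m))) <> origin) by (apply scale_neq0; auto; lra).
  assert (La : l < vnorm (scale (1 - s) (E m))) by (rewrite vnorm_scale; lra).
  assert (Lb : l < vnorm (scale (1 - s) (E (S m)))) by (rewrite vnorm_scale; lra).
  constructor; intros j Hj; unfold_surgery; index_cases;
    repeat match goal with |- context [pred ?k] => is_var k; destruct k; [lia|] end;
    cbn [pred] in *.
  all: try old_fact.
  - rewrite angle_scale_l, angle_scale_r, angle_sym by lra.
    apply angle_add_le; auto.
    + apply angle_self_le; auto.
    + rewrite angle_sym; assumption.
  - rewrite angle_scale_l, angle_scale_r by lra.
    apply angle_add_le; auto. apply angle_self_le; auto.
Qed.

Ltac cross_nonzero :=
  repeat progress rewrite ?cross_scale_l, ?cross_scale_r, ?cross_add_l, ?cross_add_r;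
  rewrite ?cross_self, ?Rmult_0_r, ?Rplus_0_l, ?Rplus_0_r;
  repeat (apply Rmult_integral_contrapositive_currified; [lra|]).

Lemma edges_turning_slide_back : edges_turning n E ->
  ((S (S m) < n)%nat -> cross (E (S m)) (E (S (S m))) + s * cross (E m) (E (S (S m))) <> 0) ->
  edges_turning n (slide_back_edges s m E).
Proof.
  intros HT Hnext j Hj; unfold_surgery; index_cases; cross_nonzero;
    first [apply HT; lia | apply Hnext; lia].
Qed.

Lemma edges_turning_slide_forward : edges_turning n E ->
  (forall j, S j = m -> cross (E j) (E m) + s * cross (E j) (E (S m)) <> 0) ->
  edges_turning n (slide_forward_edges s m E).
Proof.
  intros HT Hprev j Hj; unfold_surgery; index_cases; cross_nonzero;
    first [apply HT; lia | apply Hprev; reflexivity].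
Qed.

Lemma edges_turning_cut_corner : edges_turning n E ->
  edges_turning (S n) (cut_corner_edges s m E).
Proof.
  intros HT j Hj; unfold_surgery; index_cases;
    repeat match goal with |- context [pred ?k] => is_var k; destruct k; [lia|] end;
    cbn [pred]; cross_nonzero; apply HT; lia.
Qed.

Lemma norm_sum_slide_back_lt : cross (E m) (E (S m)) <> 0 ->
  rsum (fun j => vnorm (slide_back_edges s m E j)) n
  < rsum (fun j => vnorm (E j)) n.
Proof.
  intros Hc. apply (rsum_lt_replace2 _ _ m); auto.
  - intros j H0 H1. unfold_surgery. index_cases. reflexivity.
  - unfold_surgery. index_cases.
    assert (Hlt : vnorm (vadd (E (S m)) (scale s (E m))) < vnorm (E (S m)) + vnorm (scale s (E m))).
    { apply vnorm_add_lt. rewrite cross_scale_r, cross_anticomm.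
      apply Rmult_integral_contrapositive_currified; [lra|]. apply Ropp_neq_0_compat, Hc. }
    rewrite !vnorm_scale in * by lra. lra.
Qed.

Lemma norm_sum_slide_forward_lt : cross (E m) (E (S m)) <> 0 ->
  rsum (fun j => vnorm (slide_forward_edges s m E j)) n
  < rsum (fun j => vnorm (E j)) n.
Proof.
  intros Hc. apply (rsum_lt_replace2 _ _ m); auto.
  - intros j H0 H1. unfold_surgery. index_cases. reflexivity.
  - unfold_surgery. index_cases.
    assert (Hlt : vnorm (vadd (E m) (scale s (E (S m)))) < vnorm (E m) + vnorm (scale s (E (S m)))).
    { apply vnorm_add_lt. rewrite cross_scale_r.
      apply Rmult_integral_contrapositive_currified; [lra | exact Hc]. }
    rewrite !vnorm_scale in * by lra. lra.
Qed.

Lemma norm_sum_cut_corner_lt : cross (E m) (E (S m)) <> 0 ->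
  rsum (fun j => vnorm (cut_corner_edges s m E j)) (S n)
  < rsum (fun j => vnorm (E j)) n.
Proof.
  intros Hc. apply (rsum_lt_replace2_by3 _ _ m); auto.
  - intros j Hj. unfold_surgery. index_cases. reflexivity.
  - intros j Hj. unfold_surgery. index_cases. reflexivity.
  - unfold_surgery. index_cases.
    pose proof (vnorm_add_lt (E m) (E (S m)) Hc).
    rewrite !vnorm_scale by lra. nra.
Qed.

End EdgeSurgery.

Lemma vsub_eq0 a b : vsub a b = origin <-> a = b.
Proof.
  destruct a as [a1 a2], b as [b1 b2]; unfold vsub, origin; simpl; split; intros H.
  - injection H; intros; f_equal; lra.
  - injection H; intros; subst; f_equal; ring.
Qed.

Lemma inflection_cross P j : inflection P j <->
  cross (edge_vec P j) (edge_vec P (S j)) * cross (edge_vec P (S j)) (edge_vec P (S (S j))) < 0.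
Proof.
  unfold inflection. replace (cross (edge_vec P (S j)) (vsub (vtx P j) (vtx P (S j)))
    * cross (edge_vec P (S j)) (vsub (vtx P (S (S (S j)))) (vtx P (S j))))
  with (cross (edge_vec P j) (edge_vec P (S j)) * cross (edge_vec P (S j)) (edge_vec P (S (S j))))
    by (unfold edge_vec, cross, vsub; simpl; ring).
  reflexivity.
Qed.

Section PathsAsEdges.

Variables (t l : R).
Hypothesis Ht : 0 <= t <= PI / 2.

Lemma dcc_path_edges P :
  dcc_path t l P <-> P <> nil /\ dcc_edges t l (pred (length P)) (edge_vec P).
Proof.
  unfold dcc_path, is_short, edge_len. split.
  - intros (Hnil & Hdist & Hturn & Hpair & Hinfl). split; [assumption|].
    assert (Hnz : forall j, (j < pred (length P))%nat -> edge_vec P j <> origin)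
      by (intros j Hj Hz; apply (proj1 (vsub_eq0 _ _)) in Hz;
          apply (Hdist j); [lia | symmetry; exact Hz]).
    assert (Hturn' : forall j, (S j < pred (length P))%nat -> angle (edge_vec P j) (edge_vec P (S j)) <= t)
      by (intros j Hj; apply Hturn; lia).
    constructor; auto.
    + intros j Hj; apply Hpair; lia.
    + intros j Hj Hshort.
      destruct (Rlt_dec (cross (edge_vec P j) (edge_vec P (S j))
                         * cross (edge_vec P (S j)) (edge_vec P (S (S j)))) 0) as [Hx|Hx].
      * apply (angle_inflection_le t Ht _ (edge_vec P (S j))); auto; try (apply Hnz; lia);
          apply Hturn'; lia.
      * apply Hinfl; [lia | assumption |]. rewrite inflection_cross; assumption.
  - intros (Hnil & [Hnz Hturn Hpair Hbridge]). repeat split; auto.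
    + intros j Hj Heq. apply (Hnz j); [lia|]. apply (proj2 (vsub_eq0 _ _)); symmetry; exact Heq.
    + intros j Hj; apply Hturn; lia.
    + intros j Hj; apply Hpair; lia.
    + intros j Hj Hshort _. apply Hbridge; auto; lia.
Qed.

Lemma nonzero_turns_edges P : dcc_path t l P ->
  nonzero_turns P <-> edges_turning (pred (length P)) (edge_vec P).
Proof.
  intros HP. apply dcc_path_edges in HP as [_ [Hnz Hturn _ _]].
  unfold nonzero_turns, edges_turning, turn. split; intros H j Hj.
  - apply (cross_neq0_of_angle t); auto; try (apply Hnz; lia); try (apply Hturn; lia).
    apply H; lia.
  - apply angle_neq0; try (apply Hnz; lia). apply H; lia.
Qed.

End PathsAsEdges.

Lemma path_length_rsum P : path_length P = rsum (edge_len P) (pred (length P)).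
Proof.
  unfold path_length. generalize (pred (length P)) as n. intros n.
  induction n as [|n IH]; [reflexivity|].
  rewrite seq_S, map_app, fold_right_app. simpl. rewrite <- IH.
  generalize (map (edge_len P) (seq 0 n)). intros r.
  induction r as [|x r IHr]; simpl; [ring | rewrite IHr; ring].
Qed.

Lemma last_vtx (P : list pt) : last P (0, 0) = vtx P (pred (length P)).
Proof.
  unfold vtx. induction P as [|x P IH]; [reflexivity|].
  destruct P as [|y P]; [reflexivity|]. simpl in *. rewrite IH. reflexivity.
Qed.

Definition splice (P : list pt) (k : nat) (xs : list pt) : list pt :=
  firstn k P ++ xs ++ skipn (S k) P.

Lemma length_splice P k xs : (k < length P)%nat ->
  length (splice P k xs) = (length P + length xs - 1)%nat.
Proof.
  intros Hk. unfold splice. rewrite !length_app, length_skipn, firstn_length_le by lia. lia.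
Qed.

Lemma vtx_splice P k xs j : (k < length P)%nat ->
  vtx (splice P k xs) j =
  if j <? k then vtx P j
  else if j <? k + length xs then nth (j - k) xs (0, 0) else vtx P (j + 1 - length xs).
Proof.
  intros Hk. unfold splice, vtx.
  assert (Hf : length (firstn k P) = k) by (apply firstn_length_le; lia).
  destruct (Nat.ltb_spec j k).
  - rewrite app_nth1, nth_firstn by lia. replace (j <? k) with true by (symmetry; apply Nat.ltb_lt; lia).
    reflexivity.
  - rewrite app_nth2, Hf by lia. destruct (Nat.ltb_spec j (k + length xs)).
    + rewrite app_nth1 by lia. reflexivity.
    + rewrite app_nth2, nth_skipn by lia. f_equal. lia.
Qed.

Lemma splice_frame a b P k xs : (k < length P)%nat ->
  a ++ splice P k xs ++ b = splice (a ++ P ++ b) (length a + k) xs.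
Proof.
  intros Hk. unfold splice.
  rewrite firstn_app, skipn_app, (firstn_all2 a), (skipn_all2 a) by lia.
  replace (length a + k - length a)%nat with k by lia.
  replace (S (length a + k) - length a)%nat with (S k) by lia.
  rewrite firstn_app, skipn_app.
  replace (k - length P)%nat with 0%nat by lia.
  replace (S k - length P)%nat with 0%nat by lia.
  rewrite !app_assoc. simpl. rewrite !app_nil_r, <- !app_assoc. reflexivity.
Qed.

Lemma vtx_frame a b P j : (j < length P)%nat -> vtx (a ++ P ++ b) (length a + j) = vtx P j.
Proof.
  intros Hj. unfold vtx. rewrite app_nth2 by lia. replace (length a + j - length a)%nat with j by lia.
  apply app_nth1; lia.
Qed.

Lemma edge_frame a b P j : (S j < length P)%nat ->
  edge_vec (a ++ P ++ b) (length a + j) = edge_vec P j.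
Proof.
  intros Hj. unfold edge_vec. rewrite <- Nat.add_succ_r, !vtx_frame by lia. reflexivity.
Qed.

Ltac splice_simpl :=
  rewrite ?Nat.sub_diag, ?Nat.add_sub; cbn [nth];
  unfold edge_vec, vsub, vadd, scale; pt_ring.

Definition slide_back (s : R) (P : list pt) (i : nat) : list pt :=
  splice P (S i) [vsub (vtx P (S i)) (scale s (edge_vec P i))].

Lemma length_slide_back s P i : (S i < length P)%nat -> length (slide_back s P i) = length P.
Proof. intros Hi. unfold slide_back. rewrite length_splice by lia. simpl. lia. Qed.

Lemma edges_slide_back s P i j : (S (S i) < length P)%nat ->
  edge_vec (slide_back s P i) j = slide_back_edges s i (edge_vec P) j.
Proof.
  intros Hi. unfold slide_back, slide_back_edges, replace2. unfold edge_vec at 1.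
  rewrite !vtx_splice by lia. cbn [length]. index_cases; splice_simpl.
Qed.

Definition slide_forward (s : R) (P : list pt) (i : nat) : list pt :=
  splice P (S i) [vadd (vtx P (S i)) (scale s (edge_vec P (S i)))].

Lemma length_slide_forward s P i : (S i < length P)%nat -> length (slide_forward s P i) = length P.
Proof. intros Hi. unfold slide_forward. rewrite length_splice by lia. simpl. lia. Qed.

Lemma edges_slide_forward s P i j : (S (S i) < length P)%nat ->
  edge_vec (slide_forward s P i) j = slide_forward_edges s i (edge_vec P) j.
Proof.
  intros Hi. unfold slide_forward, slide_forward_edges, replace2. unfold edge_vec at 1.
  rewrite !vtx_splice by lia. cbn [length]. index_cases; splice_simpl.
Qed.

Definition cut_corner (s : R) (P : list pt) (i : nat) : list pt :=
  splice P (S i) [vsub (vtx P (S i)) (scale s (edge_vec P i));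
                  vadd (vtx P (S i)) (scale s (edge_vec P (S i)))].

Lemma length_cut_corner s P i : (S i < length P)%nat -> length (cut_corner s P i) = S (length P).
Proof. intros Hi. unfold cut_corner. rewrite length_splice by lia. simpl. lia. Qed.

Lemma edges_cut_corner s P i j : (S (S i) < length P)%nat ->
  edge_vec (cut_corner s P i) j = cut_corner_edges s i (edge_vec P) j.
Proof.
  intros Hi. unfold cut_corner, cut_corner_edges, replace2_by3. unfold edge_vec at 1.
  rewrite !vtx_splice by lia. cbn [length]. index_cases;
    try replace (S (S i) - S i)%nat with 1%nat by lia;
    try replace (S (S (S i)) + 1 - 2)%nat with (S (S i)) by lia.
  5: destruct j as [|j]; [lia|];
      replace (S (S j) + 1 - 2)%nat with (S j) by lia; replace (S j + 1 - 2)%nat with j by lia.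
  all: splice_simpl.
Qed.

Lemma splice_neq_nil P k xs : (S k < length P)%nat -> splice P k xs <> nil.
Proof.
  intros Hk Hnil. apply (f_equal (@length pt)) in Hnil.
  unfold splice in Hnil. rewrite !length_app, length_skipn in Hnil. simpl in Hnil. lia.
Qed.

Lemma slide_back_frame s a b p i : (S (S i) < length p)%nat ->
  a ++ slide_back s p i ++ b = slide_back s (a ++ p ++ b) (length a + i).
Proof.
  intros Hi. unfold slide_back. rewrite splice_frame by lia.
  rewrite <- Nat.add_succ_r, vtx_frame, edge_frame by lia. reflexivity.
Qed.

Lemma slide_forward_frame s a b p i : (S (S i) < length p)%nat ->
  a ++ slide_forward s p i ++ b = slide_forward s (a ++ p ++ b) (length a + i).
Proof.
  intros Hi. unfold slide_forward. rewrite splice_frame by lia.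
  rewrite <- Nat.add_succ_r, vtx_frame, edge_frame by lia. reflexivity.
Qed.

Lemma cut_corner_frame s a b p i : (S (S i) < length p)%nat ->
  a ++ cut_corner s p i ++ b = cut_corner s (a ++ p ++ b) (length a + i).
Proof.
  intros Hi. unfold cut_corner. rewrite splice_frame by lia.
  rewrite <- Nat.add_succ_r, vtx_frame, !edge_frame by lia. reflexivity.
Qed.

Section PathSurgery.

Variables (t l s : R) (P : list pt) (i : nat).
Hypotheses (Ht : 0 <= t <= PI / 2) (Hs : 0 < s < 1) (Hi : (S (S i) < length P)%nat).

Lemma dcc_path_slide_back : dcc_path t l P ->
  l < (1 - s) * edge_len P i -> edge_len P (S i) < l -> dcc_path t l (slide_back s P i).
Proof.
  intros HP Hlong Hshort. apply (dcc_path_edges t l Ht) in HP as [_ HE].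
  apply (dcc_path_edges t l Ht). split; [apply splice_neq_nil; lia|].
  rewrite length_slide_back by lia.
  apply dcc_edges_ext with (2 := dcc_edges_slide_back t l _ _ i s Ht HE ltac:(lia) Hs Hlong Hshort).
  intros j. symmetry. apply edges_slide_back; lia.
Qed.

Lemma nonzero_turns_slide_back : dcc_path t l P -> nonzero_turns P ->
  dcc_path t l (slide_back s P i) ->
  ((S (S (S i)) < length P)%nat ->
   cross (edge_vec P (S i)) (edge_vec P (S (S i)))
   + s * cross (edge_vec P i) (edge_vec P (S (S i))) <> 0) ->
  nonzero_turns (slide_back s P i).
Proof.
  intros HP HT HQ Hnext. apply (nonzero_turns_edges t l Ht) in HT; [|assumption].
  apply (nonzero_turns_edges t l Ht); [assumption|].
  rewrite length_slide_back by lia.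
  apply edges_turning_ext with (2 := edges_turning_slide_back (pred (length P)) (edge_vec P) i s
    ltac:(lia) Hs HT ltac:(intros; apply Hnext; lia)).
  intros j. symmetry. apply edges_slide_back; lia.
Qed.

Lemma path_length_slide_back : cross (edge_vec P i) (edge_vec P (S i)) <> 0 ->
  path_length (slide_back s P i) < path_length P.
Proof.
  intros Hc. rewrite !path_length_rsum, length_slide_back by lia.
  unfold edge_len. erewrite rsum_ext by (intros j _; rewrite edges_slide_back by lia; reflexivity).
  apply norm_sum_slide_back_lt; [lia | assumption | assumption].
Qed.

Lemma dcc_path_slide_forward : dcc_path t l P ->
  edge_len P i < l -> l < (1 - s) * edge_len P (S i) -> dcc_path t l (slide_forward s P i).
Proof.
  intros HP Hshort Hlong. apply (dcc_path_edges t l Ht) in HP as [_ HE].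
  apply (dcc_path_edges t l Ht). split; [apply splice_neq_nil; lia|].
  rewrite length_slide_forward by lia.
  apply dcc_edges_ext with (2 := dcc_edges_slide_forward t l _ _ i s Ht HE ltac:(lia) Hs Hshort Hlong).
  intros j. symmetry. apply edges_slide_forward; lia.
Qed.

Lemma nonzero_turns_slide_forward : dcc_path t l P -> nonzero_turns P ->
  dcc_path t l (slide_forward s P i) ->
  (forall j, S j = i ->
   cross (edge_vec P j) (edge_vec P i) + s * cross (edge_vec P j) (edge_vec P (S i)) <> 0) ->
  nonzero_turns (slide_forward s P i).
Proof.
  intros HP HT HQ Hprev. apply (nonzero_turns_edges t l Ht) in HT; [|assumption].
  apply (nonzero_turns_edges t l Ht); [assumption|].
  rewrite length_slide_forward by lia.
  apply edges_turning_ext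
    with (2 := edges_turning_slide_forward (pred (length P)) (edge_vec P) i s ltac:(lia) Hs HT Hprev).
  intros j. symmetry. apply edges_slide_forward; lia.
Qed.

Lemma path_length_slide_forward : cross (edge_vec P i) (edge_vec P (S i)) <> 0 ->
  path_length (slide_forward s P i) < path_length P.
Proof.
  intros Hc. rewrite !path_length_rsum, length_slide_forward by lia.
  unfold edge_len. erewrite rsum_ext by (intros j _; rewrite edges_slide_forward by lia; reflexivity).
  apply norm_sum_slide_forward_lt; [lia | assumption | assumption].
Qed.

Lemma dcc_path_cut_corner : dcc_path t l P ->
  l < (1 - s) * edge_len P i -> l < (1 - s) * edge_len P (S i) -> dcc_path t l (cut_corner s P i).
Proof.
  intros HP Hlong0 Hlong1. apply (dcc_path_edges t l Ht) in HP as [_ HE].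
  apply (dcc_path_edges t l Ht). split; [apply splice_neq_nil; lia|].
  rewrite length_cut_corner by lia.
  replace (pred (S (length P))) with (S (pred (length P))) by lia.
  apply dcc_edges_ext with (2 := dcc_edges_cut_corner t l _ _ i s Ht HE ltac:(lia) Hs Hlong0 Hlong1).
  intros j. symmetry. apply edges_cut_corner; lia.
Qed.

Lemma nonzero_turns_cut_corner : dcc_path t l P -> nonzero_turns P ->
  dcc_path t l (cut_corner s P i) -> nonzero_turns (cut_corner s P i).
Proof.
  intros HP HT HQ. apply (nonzero_turns_edges t l Ht) in HT; [|assumption].
  apply (nonzero_turns_edges t l Ht); [assumption|].
  rewrite length_cut_corner by lia.
  replace (pred (S (length P))) with (S (pred (length P))) by lia.
  apply edges_turning_ext
    with (2 := edges_turning_cut_corner (pred (length P)) (edge_vec P) i s ltac:(lia) Hs HT).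
  intros j. symmetry. apply edges_cut_corner; lia.
Qed.

Lemma path_length_cut_corner : cross (edge_vec P i) (edge_vec P (S i)) <> 0 ->
  path_length (cut_corner s P i) < path_length P.
Proof.
  intros Hc. rewrite !path_length_rsum, length_cut_corner by lia.
  replace (pred (S (length P))) with (S (pred (length P))) by lia.
  unfold edge_len. erewrite rsum_ext by (intros j _; rewrite edges_cut_corner by lia; reflexivity).
  apply norm_sum_cut_corner_lt; [lia | assumption | assumption].
Qed.

End PathSurgery.

Lemma small_mult_lt A B : 0 < B -> exists e, 0 < e /\ forall s, 0 <= s < e -> s * A < B.
Proof.
  intros HB. pose proof (Rabs_pos A). exists (B / (Rabs A + 1)). split.
  - apply Rdiv_lt_0_compat; lra.
  - intros s [Hs0 Hs1]. pose proof (Rle_abs A).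
    assert (Hs : s * (Rabs A + 1) < B).
    { apply Rmult_lt_reg_r with (/ (Rabs A + 1)); [apply Rinv_0_lt_compat; lra|].
      rewrite Rmult_assoc, Rinv_r by lra. lra. }
    nra.
Qed.

Lemma small_perturb_neq0 x y :
  exists e, 0 < e /\ forall s, 0 <= s < e -> x <> 0 -> x + s * y <> 0.
Proof.
  destruct (Req_dec x 0) as [Hx|Hx]; [exists 1; split; [lra | tauto]|].
  destruct (small_mult_lt (Rabs y) (Rabs x)) as (e & He & Hsmall); [apply Rabs_pos_lt, Hx|].
  exists e. split; [assumption|]. intros s Hs _ Hsum.
  specialize (Hsmall s Hs). rewrite <- (Rabs_pos_eq s), <- Rabs_mult in Hsmall by lra.
  replace x with (- (s * y)) in Hsmall by lra. rewrite Rabs_Ropp in Hsmall. lra.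
Qed.

Lemma small_positive e1 e2 : 0 < e1 -> 0 < e2 -> exists s, 0 < s < 1 /\ s < e1 /\ s < e2.
Proof.
  intros H1 H2. exists (Rmin (Rmin e1 e2) 1 / 2).
  pose proof (Rmin_l (Rmin e1 e2) 1); pose proof (Rmin_r (Rmin e1 e2) 1).
  pose proof (Rmin_l e1 e2); pose proof (Rmin_r e1 e2).
  assert (0 < Rmin (Rmin e1 e2) 1) by (repeat apply Rmin_pos; lra).
  repeat split; lra.
Qed.

Lemma vtx_splice_first P k xs : (0 < k < length P)%nat -> vtx (splice P k xs) 0 = vtx P 0.
Proof. intros Hk. rewrite vtx_splice by lia. index_cases. reflexivity. Qed.

Lemma vtx_splice_last P k xs : (S k < length P)%nat ->
  vtx (splice P k xs) (pred (length (splice P k xs))) = vtx P (pred (length P)).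
Proof. intros Hk. rewrite length_splice, vtx_splice by lia. index_cases. f_equal. lia. Qed.

Section Admissibility.

Variables (t l : R) (u U v V : pt).

(* Pre- and post-edges are handled by proving the local change inside any frame [a ++ _ ++ b]. *)
Lemma admissible_of_local_change p q : admissible t l u U v V p ->
  vtx q 0 = vtx p 0 -> vtx q (pred (length q)) = vtx p (pred (length p)) ->
  (forall a b, dcc_path t l (a ++ p ++ b) -> dcc_path t l (a ++ q ++ b)) ->
  (dcc_path t l q -> nonzero_turns q) -> admissible t l u U v V q.
Proof.
  intros (Hp & [Hu Hpre] & [Hv Hpost] & _) Hfirst Hlast Hframe Hnz.
  assert (Hq : dcc_path t l q)
    by (rewrite <- (app_nil_r q); apply (Hframe nil nil); rewrite app_nil_r; exact Hp).
  refine (conj Hq (conj (conj _ _) (conj (conj _ _) (Hnz Hq)))).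
  - congruence.
  - pose proof (Hframe [vsub u U] nil) as H. rewrite !app_nil_r in H. exact (H Hpre).
  - rewrite last_vtx, Hlast, <- (last_vtx p). exact Hv.
  - exact (Hframe nil [vadd v V] Hpost).
Qed.

End Admissibility.

Lemma edge_len_frame a b P j : (S j < length P)%nat ->
  edge_len (a ++ P ++ b) (length a + j) = edge_len P j.
Proof. intros Hj. unfold edge_len. rewrite edge_frame by lia. reflexivity. Qed.

Section ShorterPaths.

Variables (t l : R) (u U v V : pt) (p : list pt) (i : nat).
Hypotheses (Ht : 0 <= t <= PI / 2) (Hadm : admissible t l u U v V p)
  (Hi : (S (S i) < length p)%nat).

Let Hp : dcc_path t l p := proj1 Hadm.
Let Hnz : nonzero_turns p := proj2 (proj2 (proj2 Hadm)).
Let HT : edges_turning (pred (length p)) (edge_vec p) := proj1 (nonzero_turns_edges t l Ht p Hp) Hnz.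

Ltac framed_side_conditions :=
  rewrite ?length_app in *; rewrite <- ?Nat.add_succ_r, ?edge_len_frame by lia; first [lia | lra].

Lemma shorter_of_long_short : is_long l p i -> is_short l p (S i) ->
  exists q, admissible t l u U v V q /\ path_length q < path_length p.
Proof.
  unfold is_long, is_short. intros Hlong Hshort.
  destruct (small_mult_lt (edge_len p i) (edge_len p i - l)) as (e1 & He1 & Hsmall1); [lra|].
  destruct (small_perturb_neq0 (cross (edge_vec p (S i)) (edge_vec p (S (S i))))
              (cross (edge_vec p i) (edge_vec p (S (S i))))) as (e2 & He2 & Hsmall2).
  destruct (small_positive e1 e2 He1 He2) as (s & Hs & Hs1 & Hs2).
  assert (Hlong' : l < (1 - s) * edge_len p i) by (specialize (Hsmall1 s ltac:(lra)); lra).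
  exists (slide_back s p i). split.
  - apply (admissible_of_local_change t l u U v V p); auto.
    + apply vtx_splice_first; lia.
    + apply vtx_splice_last; lia.
    + intros a b Hab. rewrite slide_back_frame by lia.
      apply dcc_path_slide_back; auto; framed_side_conditions.
    + intros Hq. apply (nonzero_turns_slide_back t l); auto.
      intros H3. apply Hsmall2; [lra | apply HT; lia].
  - apply path_length_slide_back; auto. apply HT; lia.
Qed.

Lemma shorter_of_short_long : is_short l p i -> is_long l p (S i) ->
  exists q, admissible t l u U v V q /\ path_length q < path_length p.
Proof.
  unfold is_long, is_short. intros Hshort Hlong.
  destruct (small_mult_lt (edge_len p (S i)) (edge_len p (S i) - l)) as (e1 & He1 & Hsmall1); [lra|].
  destruct (small_perturb_neq0 (cross (edge_vec p (pred i)) (edge_vec p i))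
              (cross (edge_vec p (pred i)) (edge_vec p (S i)))) as (e2 & He2 & Hsmall2).
  destruct (small_positive e1 e2 He1 He2) as (s & Hs & Hs1 & Hs2).
  assert (Hlong' : l < (1 - s) * edge_len p (S i)) by (specialize (Hsmall1 s ltac:(lra)); lra).
  exists (slide_forward s p i). split.
  - apply (admissible_of_local_change t l u U v V p); auto.
    + apply vtx_splice_first; lia.
    + apply vtx_splice_last; lia.
    + intros a b Hab. rewrite slide_forward_frame by lia.
      apply dcc_path_slide_forward; auto; framed_side_conditions.
    + intros Hq. apply (nonzero_turns_slide_forward t l); auto.
      intros j <-. apply Hsmall2; [lra | apply HT; lia].
  - apply path_length_slide_forward; auto. apply HT; lia.
Qed.

Lemma shorter_of_long_long : is_long l p i -> is_long l p (S i) ->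
  exists q, admissible t l u U v V q /\ path_length q < path_length p.
Proof.
  unfold is_long. intros Hlong0 Hlong1.
  destruct (small_mult_lt (edge_len p i) (edge_len p i - l)) as (e0 & He0 & Hsmall0); [lra|].
  destruct (small_mult_lt (edge_len p (S i)) (edge_len p (S i) - l)) as (e1 & He1 & Hsmall1); [lra|].
  destruct (small_positive e0 e1 He0 He1) as (s & Hs & Hs0 & Hs1).
  assert (Hlong0' : l < (1 - s) * edge_len p i) by (specialize (Hsmall0 s ltac:(lra)); lra).
  assert (Hlong1' : l < (1 - s) * edge_len p (S i)) by (specialize (Hsmall1 s ltac:(lra)); lra).
  exists (cut_corner s p i). split.
  - apply (admissible_of_local_change t l u U v V p); auto.
    + apply vtx_splice_first; lia.
    + apply vtx_splice_last; lia.
    + intros a b Hab. rewrite cut_corner_frame by lia.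
      apply dcc_path_cut_corner; auto; framed_side_conditions.
    + intros Hq. apply (nonzero_turns_cut_corner t l); auto.
  - apply path_length_cut_corner; auto. apply HT; lia.
Qed.

Lemma shorter_of_abnormal_pair :
  is_short l p i \/ is_long l p i -> is_short l p (S i) \/ is_long l p (S i) ->
  exists q, admissible t l u U v V q /\ path_length q < path_length p.
Proof.
  intros [H0|H0] [H1|H1].
  - exfalso. pose proof Hp as (_ & _ & _ & Hpair & _). exact (Hpair i Hi (conj H0 H1)).
  - apply shorter_of_short_long; assumption.
  - apply shorter_of_long_short; assumption.
  - apply shorter_of_long_long; assumption.
Qed.

End ShorterPaths.

Lemma short_or_long_of_not_normal l p j : ~ is_normal l p j -> is_short l p j \/ is_long l p j.
Proof.
  unfold is_short, is_long, is_normal. intros Hj.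
  destruct (Rtotal_order (edge_len p j) l) as [H|[H|H]]; tauto.
Qed.

Theorem lemma1 (theta l : R) (k : nat)
  (Htheta0 : 0 <= theta) (Htheta1 : theta <= PI / 2)
  (Hk : theta * INR k = 2 * PI) (Hl : 0 < l)
  (u U v V : pt) (HU : is_config l u U) (HV : is_config l v V)
  (p : list pt) (Hp : discrete_dubins theta l u U v V p) :
  forall i, (S (S i) < length p)%nat ->
    ((is_short l p i \/ is_long l p i) -> is_normal l p (S i)) /\
    ((is_short l p (S i) \/ is_long l p (S i)) -> is_normal l p i).
Proof.
  intros i Hi. destruct Hp as [Hadm Hmin].
  assert (Ht : 0 <= theta <= PI / 2) by lra.
  assert (Hnot_both : ~ ((is_short l p i \/ is_long l p i) /\ (is_short l p (S i) \/ is_long l p (S i)))).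
  { intros [H0 H1].
    destruct (shorter_of_abnormal_pair theta l u U v V p i Ht Hadm Hi H0 H1) as (q & Hq & Hlt).
    specialize (Hmin q Hq). lra. }
  unfold is_normal.
  split; intros Habn; [destruct (Req_dec (edge_len p (S i)) l) | destruct (Req_dec (edge_len p i) l)];
    auto; exfalso; apply Hnot_both; auto using short_or_long_of_not_normal.
Qed.
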